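(* For all non-negative integers $n,k,m$, $$\det\Big(C_{2n+2i+2j+4m-2}^{(2k+2m-1)}\Big)_{0\le i,j\le k-1}=\det\Big(C_{-2n-2i-2j}^{(2k+2m-1)}\Big)_{0\le i,j\le m-1},$$ where a $0\times0$ determinant equals $1$.
   Context: For $N\ge0$, $C_N^{(K)}$ is the number of lattice paths with steps $(1,1),(1,-1)$ from $(0,0)$ to $(N,0)$ never going below the $x$-axis nor above $y=K$. For odd $K$ the generating function $F(x)=\sum_{N\ge0}C_N^{(K)}x^N$ is a rational function $p/q$ with $\deg p<\deg q$, $q(0)\neq0$; $C_N^{(K)}$ for negative $N$ is defined by extending the associated linear recurrence backwards, equivalently $\sum_{N\ge1}C_{-N}^{(K)}x^N=-F(1/x)$. *)

From HB Require Import structures.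
From mathcomp Require Import all_boot all_order all_algebra.
Set Implicit Arguments. Unset Strict Implicit. Unset Printing Implicit Defensive.
Import Order.TTheory GRing.Theory Num.Theory.

(* A step sequence: true = (1,1), false = (1,-1).  [path_ok K h s] holds iff
   starting at height h, the path s never goes below 0 nor above K, and
   ends at height 0. *)
Fixpoint path_ok (K h : nat) (s : seq bool) : bool :=
  match s with
  | [::] => h == 0
  | b :: s' => if b then (h < K) && path_ok K h.+1 s'
               else (0 < h) && path_ok K h.-1 s'
  end.

Definition C (K N : nat) : nat :=
  #|[set t : N.-tuple bool | path_ok K 0 t]|.

Local Open Scope ring_scope.

(* [c] is the extension of (C_N^{(K)})_{N>=0} to all integers N obtained by
   running a linear recurrence with constant coefficients (nonzero leading and
   trailing coefficient) backwards.  Such an extension is unique. *)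
Definition Cext (K : nat) (c : int -> int) : Prop :=
  (forall N : nat, c N%:Z = (C K N)%:Z) /\
  exists (d : nat) (a : nat -> int),
    a 0%N != 0 /\ a d != 0 /\
    forall N : int, \sum_(i < d.+1) a i * c (N + (i : nat)%:Z) = 0.

From HB Require Import structures.
From mathcomp Require Import all_boot all_order all_algebra.
From mathcomp Require Import all_fingroup zify.
Set Implicit Arguments. Unset Strict Implicit. Unset Printing Implicit Defensive.
Import Order.TTheory GRing.Theory Num.Theory.

(* Put d = k + m, so that K = 2d - 1.  A bounded path of
   even length returns to an even height, and two steps move between even
   heights 2i and 2i', |i - i'| <= 1, in exactly the ways counted by the
   entries of B = L L^T, where L = 1 + S is lower bidiagonal on 'I_d.  Hence
   C_{2N} = <e0, B^N e0> and the odd terms vanish.  Since det L = 1, B is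
   invertible over the integers; the sequence z |-> <e0, B^(z/2) e0> (zero
   at odd z) satisfies every recurrence satisfied by (C_N) (Krylov argument),
   so by uniqueness of backward extension it is the extension c.
     A Hankel determinant det (c (2 (z + i + j)))_{i,j<p} is then the Gram
   determinant of the vectors B^i e0, which are unitriangular in the standard
   basis; it equals the leading p x p principal minor of B^z.  Jacobi's
   complementary-minor identity relates the leading k x k minor of B^z to the
   trailing m x m minor of B^-z, and reversing the order of the basis turns
   B^-z into a unitriangular conjugate of B^(1-z), whose leading m x m minor
   is the second Hankel determinant. *)

Fixpoint walks (K N h : nat) : nat :=
  match N with
  | 0 => h == 0
  | N'.+1 => (if h < K then walks K N' h.+1 else 0) +
             (if 0 < h then walks K N' h.-1 else 0)
  end.

Lemma card_set_sum (T : finType) (P : pred T) :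
  #|[set x | P x]| = \sum_x (P x : nat).
Proof.
rewrite -sum1_card big_mkcond /=.
by apply: eq_bigr => x _; rewrite inE; case: (P x).
Qed.

Lemma sum_tuple_cons N (G : N.+1.-tuple bool -> nat) :
  \sum_(t : N.+1.-tuple bool) G t =
  \sum_(t : N.-tuple bool) (G [tuple of true :: t] + G [tuple of false :: t]).
Proof.
rewrite (reindex (fun p : bool * N.-tuple bool => [tuple of p.1 :: p.2])) /=.
  rewrite -(pair_big xpredT xpredT (fun b (t : N.-tuple bool) => G [tuple of b :: t])).
  by rewrite big_bool /= big_split.
exists (fun t : N.+1.-tuple bool => (thead t, [tuple of behead t])).
  by move=> [b t] _; congr pair; apply: val_inj.
by move=> t _; rewrite /= -tuple_eta.
Qed.

Lemma card_path_ok K N h :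
  #|[set t : N.-tuple bool | path_ok K h t]| = walks K N h.
Proof.
rewrite card_set_sum; elim: N h => [|N IH] h.
  by rewrite (big_pred1 [tuple]) //= => t; apply/esym/eqP; rewrite [t]tuple0.
rewrite sum_tuple_cons big_split /=.
by case: (h < K); case: (0 < h); rewrite /= -?IH ?big1_eq.
Qed.

Lemma walks_high K N h : N < h -> walks K N h = 0.
Proof.
elim: N h => [|N IH] h /= hN; first by case: h hN.
by rewrite (IH h.+1) ?(IH h.-1) ?if_same //; lia.
Qed.

Lemma walks_diag K N : N <= K -> walks K N N = 1.
Proof.
elim: N => [|N IH] //= hN.
by rewrite walks_high ?IH ?if_same //; lia.
Qed.

(* Each step changes the parity of the height. *)
Lemma walks_odd K N h : odd (N + h) -> walks K N h = 0.
Proof.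
elim: N h => [|N IH] h /=; first by case: h.
case: h => [|h] hp.
  by rewrite IH ?if_same //= addn1 /=; move: hp; rewrite addn0.
rewrite (IH h.+2) ?(IH h) ?if_same //.
- by move: hp; rewrite addnS /= negbK.
- by move: hp; rewrite !addnS /= negbK.
Qed.

(* Two steps between even heights 2i of the strip [0, 2d - 1]: to 2i + 2 (if
   i + 1 < d), twice back to 2i (once only when i = 0), and to 2i - 2. *)
Lemma walks_two_steps d N i : i < d ->
  walks (2 * d).-1 N.+2 (2 * i) =
    (if i.+1 < d then walks (2 * d).-1 N (2 * i).+2 else 0) +
     walks (2 * d).-1 N (2 * i) +
     (if i is i'.+1 then walks (2 * d).-1 N (2 * i') + walks (2 * d).-1 N (2 * i)
      else 0).
Proof.
move=> hi /=.
have -> : 2 * i < (2 * d).-1 by lia.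
have -> : ((2 * i).+1 < (2 * d).-1) = (i.+1 < d) by apply/idP/idP; lia.
case: i hi => [|i] hi; first by rewrite addn0.
have -> : 0 < 2 * i.+1 by lia.
have -> : (2 * i.+1).-1 < (2 * d).-1 by lia.
have -> : (2 * i.+1).-1.-1 = 2 * i by lia.
have -> : (2 * i.+1).-1.+1 = 2 * i.+1 by lia.
have -> : 0 < (2 * i.+1).-1 by lia.
by rewrite (addnC (walks _ N (2 * i))).
Qed.

Local Open Scope ring_scope.

Section GenericMinors.

Variable R : comPzRingType.

Lemma det_unitrig d (A : 'M[R]_d) :
  is_trig_mx A -> (forall i, A i i = 1) -> \det A = 1.
Proof. by move=> /det_trig-> diag1; rewrite big1. Qed.

Lemma det_pow d (A : 'M[R]_d) n : \det (A ^+ n) = \det A ^+ n.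
Proof.
elim: n => [|n IH]; first by rewrite !expr0 det1.
by rewrite !exprS -mulmxE det_mulmx IH.
Qed.

Definition rev_mx d (X : 'M[R]_d) : 'M[R]_d :=
  \matrix_(i, j) X (rev_ord i) (rev_ord j).

Lemma det_rev_mx d (X : 'M[R]_d) : \det (rev_mx X) = \det X.
Proof.
pose s : 'S_d := perm (@rev_ord_inj d).
have -> : rev_mx X = row_perm s (col_perm s X).
  by apply/matrixP => i j; rewrite !mxE !permE.
rewrite row_permE col_permE !det_mulmx !det_perm odd_permV.
by rewrite mulrC -mulrA -signr_addb addbb mulr1.
Qed.

Lemma rev_mxM d (X Y : 'M[R]_d) : rev_mx (X * Y) = rev_mx X * rev_mx Y.
Proof.
apply/matrixP => i j; rewrite -!mulmxE !mxE.
by rewrite (reindex_inj rev_ord_inj) /=; apply: eq_bigr => l _; rewrite !mxE.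
Qed.

Lemma rev_mx1 d : rev_mx (1 : 'M[R]_d) = 1.
Proof. by apply/matrixP => i j; rewrite !mxE (inj_eq rev_ord_inj). Qed.

Lemma rev_mxX d (X : 'M[R]_d) n : rev_mx (X ^+ n) = rev_mx X ^+ n.
Proof.
by elim: n => [|n IH]; rewrite ?expr0 ?rev_mx1 // !exprS rev_mxM IH.
Qed.

Lemma rev_mxT d (X : 'M[R]_d) : rev_mx X^T = (rev_mx X)^T.
Proof. by apply/matrixP => i j; rewrite !mxE. Qed.

Lemma det_ulsub_inverse k m (X Y : 'M[R]_(k + m)) : X * Y = 1 ->
  \det (ulsubmx X) = \det X * \det (drsubmx Y).
Proof.
move=> XY1.
have E : X *m block_mx 1%:M (ursubmx Y) 0 (drsubmx Y) =
         block_mx (ulsubmx X) 0 (dlsubmx X) 1%:M.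
  have : X *m Y = block_mx 1%:M 0 0 1%:M by rewrite mulmxE XY1 -scalar_mx_block.
  rewrite -{1}(submxK X) -{1}(submxK Y) !mulmx_block => /eq_block_mx [_ h12 _ h22].
  by rewrite -{1}(submxK X) mulmx_block !mulmx0 !mulmx1 !addr0 h12 h22.
have := congr1 determinant E.
by rewrite det_mulmx det_ublock det_lblock !det1 mul1r mulr1 => <-.
Qed.

Definition lead_mx p d (h : (p <= d)%N) (X : 'M[R]_d) : 'M[R]_p :=
  \matrix_(i, j) X (widen_ord h i) (widen_ord h j).

Lemma sum_widen p d (h : (p <= d)%N) (G : 'I_d -> R) :
  (forall r : 'I_d, (p <= r)%N -> G r = 0) ->
  \sum_(r < d) G r = \sum_(r < p) G (widen_ord h r).
Proof.
move=> G0; rewrite (bigID (fun r : 'I_d => (r < p)%N)) /= [X in _ + X]big1.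
  by rewrite addr0 -(big_ord_narrow_cond (P := xpredT)).
by move=> r; rewrite -leqNgt; exact: G0.
Qed.

Lemma lead_mx_conj p d (h : (p <= d)%N) (A X : 'M[R]_d) : is_trig_mx A ->
  lead_mx h (A * X * A^T) = lead_mx h A * lead_mx h X * (lead_mx h A)^T.
Proof.
move=> /is_trig_mxP Atrig; apply/matrixP => i j; rewrite -!mulmxE !mxE.
rewrite (sum_widen h) => [|r hr]; last first.
  by rewrite !mxE Atrig ?mulr0 //; apply: leq_trans (ltn_ord j) hr.
apply: eq_bigr => b _; rewrite !mxE; congr (_ * _).
rewrite (sum_widen h) => [|r hr]; last first.
  by rewrite Atrig ?mul0r //; apply: leq_trans (ltn_ord i) hr.
by apply: eq_bigr => a _; rewrite !mxE.
Qed.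

Lemma det_lead_conj p d (h : (p <= d)%N) (A X : 'M[R]_d) :
  is_trig_mx A -> (forall i, A i i = 1) ->
  \det (lead_mx h (A * X * A^T)) = \det (lead_mx h X).
Proof.
move=> Atrig Adiag; rewrite lead_mx_conj // -!mulmxE !det_mulmx det_tr.
have lead1 : \det (lead_mx h A) = 1.
  apply: det_unitrig => [|i]; last by rewrite mxE Adiag.
  by apply/is_trig_mxP => i j lt_ij; rewrite mxE; move/is_trig_mxP: Atrig; apply.
by rewrite lead1 mul1r mulr1.
Qed.

End GenericMinors.

(* Two sequences satisfying the same recurrence with a 0 <> 0 and agreeing on
   the naturals agree on all of Z: the recurrence determines c z from
   c (z + 1), ..., c (z + D), so one may descend from 0 by induction. *)
Lemma recurrence_backward_unique (R : idomainType) D (a : nat -> R)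
    (c1 c2 : int -> R) : a 0%N != 0 ->
  (forall z : int, \sum_(i < D.+1) a i * c1 (z + (i : nat)%:Z) = 0) ->
  (forall z : int, \sum_(i < D.+1) a i * c2 (z + (i : nat)%:Z) = 0) ->
  (forall N : nat, c1 N%:Z = c2 N%:Z) -> c1 =1 c2.
Proof.
move=> a0 rec1 rec2 eqN.
suff above : forall (n : nat) (z : int), - (n%:Z) <= z -> c1 z = c2 z.
  by move=> z; apply: (above `|z|%N); lia.
elim=> [|n IH] z hz.
  have -> : z = `|z|%N%:Z by lia.
  exact: eqN.
have [|hz'] := boolP (- (n%:Z) <= z); first exact: IH.
have {hz hz'} ez : z = - (n.+1)%:Z by lia.
have : \sum_(i < D.+1) a i * (c1 (z + (i : nat)%:Z) - c2 (z + (i : nat)%:Z)) = 0.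
  under eq_bigr do rewrite mulrBr.
  by rewrite sumrB rec1 rec2 subrr.
rewrite big_ord_recl big1 => [|i _]; last by rewrite IH ?subrr ?mulr0 //= /bump /=; lia.
by rewrite addr0 => /eqP; rewrite mulf_eq0 (negbTE a0) subr_eq0 addr0 => /eqP.
Qed.

(* [mget X r j] reads entry (r, j) of a matrix with d rows, extended by zero
   to all r : nat; it lets us write shifts of row indices without casts. *)
Definition mget d p (X : 'M[int]_(d, p)) (r : nat) (j : 'I_p) : int :=
  if @insub nat (fun x => x < d)%N 'I_d r is Some o then X o j else 0.

Lemma mget_ord d p (X : 'M[int]_(d, p)) (o : 'I_d) j : mget X o j = X o j.
Proof. by rewrite /mget valK. Qed.

Lemma mget_out d p (X : 'M[int]_(d, p)) r j : (d <= r)%N -> mget X r j = 0.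
Proof. by move=> hr; rewrite /mget insubF // ltnNge hr. Qed.

Lemma mget_mx d p (g : nat -> 'I_p -> int) r j :
  mget (\matrix_(i < d, j < p) g i j) r j = if (r < d)%N then g r j else 0.
Proof.
case: (ltnP r d) => hr; last by rewrite mget_out.
by rewrite -[r]/(val (Ordinal hr)) mget_ord mxE.
Qed.

Lemma sum_select d (G : 'I_d -> int) r :
  \sum_(l : 'I_d) ((l : nat) == r)%:R * G l =
  if @insub nat (fun x => x < d)%N 'I_d r is Some o then G o else 0.
Proof.
case: insubP => [o _ ho|hr].
  rewrite (bigD1 o) //= ho eqxx mul1r big1 ?addr0 // => l hl.
  by rewrite -ho (inj_eq val_inj) (negbTE hl) mul0r.
rewrite big1 // => l _; case: eqP => [hl|]; last by rewrite mul0r.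
by move: hr; rewrite -hl ltn_ord.
Qed.

(* The lower shift S on 'I_d, the bidiagonal L = 1 + S, and the two-step
   transfer matrix B = L L^T on the even heights 0, 2, ..., 2d - 2. *)
Definition shift d : 'M[int]_d := \matrix_(i, j) ((i : nat) == j.+1)%:R.
Definition Lmx d : 'M[int]_d := 1 + shift d.
Definition Bmx d : 'M[int]_d := Lmx d * (Lmx d)^T.

Lemma shift_mulE d p (X : 'M[int]_(d, p)) i j :
  (shift d *m X) i j = if (i : nat) is i'.+1 then mget X i' j else 0.
Proof.
rewrite mxE; case: i => [[|i] hi] /=.
  by rewrite big1 // => l _; rewrite mxE mul0r.
rewrite /mget -(sum_select (fun l => X l j)).
by apply: eq_bigr => l _; rewrite mxE /= eqSS eq_sym.
Qed.

Lemma shiftT_mulE d p (X : 'M[int]_(d, p)) i j :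
  ((shift d)^T *m X) i j = mget X i.+1 j.
Proof.
rewrite mxE /mget -(sum_select (fun l => X l j)).
by apply: eq_bigr => l _; rewrite !mxE.
Qed.

Lemma Lmx_mulE d p (X : 'M[int]_(d, p)) i j :
  (Lmx d *m X) i j = X i j + if (i : nat) is i'.+1 then mget X i' j else 0.
Proof. by rewrite mulmxDl mul1mx mxE shift_mulE. Qed.

Lemma LmxT_mulE d p (X : 'M[int]_(d, p)) i j :
  ((Lmx d)^T *m X) i j = X i j + mget X i.+1 j.
Proof. by rewrite linearD /= trmx1 mulmxDl mul1mx mxE shiftT_mulE. Qed.

Lemma mget_LmxT_mul d p (X : 'M[int]_(d, p)) r j :
  mget ((Lmx d)^T *m X) r j =
  if (r < d)%N then mget X r j + mget X r.+1 j else 0.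
Proof.
case: (ltnP r d) => hr; last by rewrite mget_out.
by rewrite -[r]/(val (Ordinal hr)) mget_ord LmxT_mulE mget_ord.
Qed.

Lemma Bmx_mulE d p (X : 'M[int]_(d, p)) i j :
  (Bmx d *m X) i j = mget X i j + mget X i.+1 j +
    if (i : nat) is i'.+1 then mget X i' j + mget X i j else 0.
Proof.
rewrite /Bmx -mulmxE -mulmxA Lmx_mulE LmxT_mulE mget_ord.
case: i => [[|i] hi] //=; rewrite mget_LmxT_mul (ltn_trans _ hi) //.
by rewrite -(mget_ord X (Ordinal hi)).
Qed.

Definition e0 d : 'cV[int]_d := \col_(i < d) ((i : nat) == 0%N)%:R.

Lemma Bmx_pow_e0 d N :
  Bmx d ^+ N *m e0 d = \col_(i < d) (walks (2 * d).-1 (2 * N) (2 * i))%:Z.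
Proof.
elim: N => [|N IH].
  by rewrite expr0 mul1mx; apply/matrixP => i j; rewrite !mxE; case: (i : nat).
rewrite exprS -mulmxE -mulmxA IH; apply/matrixP => i j.
rewrite ord1 Bmx_mulE !(@mget_mx d 1 (fun r _ => (walks (2 * d).-1 (2 * N) (2 * r))%:Z)).
rewrite !mxE ltn_ord.
have -> : (2 * N.+1 = (2 * N).+2)%N by lia.
rewrite walks_two_steps // !PoszD.
case: i => [[|i] hi] /=.
  by case: ifP => _; rewrite /= ?addr0 ?add0r // addrC.
have hi' : (i < d)%N by lia.
rewrite -[X in mget _ X]/(val (Ordinal hi')) mget_ord mxE /=.
have -> : (2 * i.+2 = (2 * i.+1).+2)%N by lia.
by rewrite PoszD; congr (_ + _); rewrite addrC; congr (_ + _); case: ifP.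
Qed.

(* B is symmetric, so powers of B can be moved across the pairing <., .>. *)
Lemma Bmx_sym d : (Bmx d)^T = Bmx d.
Proof. by rewrite /Bmx -mulmxE trmx_mul trmxK. Qed.

Lemma Bmx_pow_sym d n : (Bmx d ^+ n)^T = Bmx d ^+ n.
Proof.
elim: n => [|n IH]; first by rewrite !expr0 trmx1.
by rewrite exprS -mulmxE trmx_mul IH Bmx_sym mulmxE -exprSr exprS.
Qed.

(* The Krylov vectors B^j e0 are unitriangular in the standard basis: a walk
   of length 2j cannot come down from height 2r > 2j, and from 2j it can only
   go straight down. *)
Lemma krylov_high d j (r : 'I_d) : (j < r)%N -> (Bmx d ^+ j *m e0 d) r 0 = 0.
Proof. by move=> hjr; rewrite Bmx_pow_e0 mxE walks_high //; lia. Qed.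

Lemma krylov_diag d (r : 'I_d) : (Bmx d ^+ r *m e0 d) r 0 = 1.
Proof. by rewrite Bmx_pow_e0 mxE walks_diag //; have := ltn_ord r; lia. Qed.

Lemma krylov_zero d (v : 'cV[int]_d) :
  (forall j, (j < d)%N -> ((e0 d)^T *m Bmx d ^+ j *m v) 0 0 = 0) -> v = 0.
Proof.
move=> orth; apply/matrixP => r c; rewrite ord1 mxE.
suff : forall n (r : 'I_d), (r : nat) = n -> v r 0 = 0 by apply.
elim/ltn_ind=> n IH {}r rn; rewrite -{n}rn in IH.
have := orth r (ltn_ord r).
rewrite -(Bmx_pow_sym d r) -trmx_mul mxE (bigD1 r) //= big1 => [|l lr].
  by rewrite mxE krylov_diag mul1r addr0.
rewrite mxE; case: (ltngtP l r) => [lltr|rltl|/val_inj elr].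
- by rewrite (IH l) ?mulr0.
- by rewrite krylov_high ?mul0r.
- by rewrite elr eqxx in lr.
Qed.

Definition Linv d : 'M[int]_d :=
  \matrix_(i, j) if (j <= i)%N then (-1) ^+ (i - j) else 0.

Lemma Lmx_trig d : is_trig_mx (Lmx d).
Proof.
apply/is_trig_mxP => i j ltij; rewrite !mxE.
by rewrite -val_eqE /= !ltn_eqF // ltnS ltnW.
Qed.

Lemma Lmx_diag d (i : 'I_d) : Lmx d i i = 1.
Proof. by rewrite !mxE eqxx; case: eqP => //; lia. Qed.

Lemma Linv_trig d : is_trig_mx (Linv d).
Proof. by apply/is_trig_mxP => i j ltij; rewrite mxE leqNgt ltij. Qed.

Lemma Linv_diag d (i : 'I_d) : Linv d i i = 1.
Proof. by rewrite mxE leqnn subnn. Qed.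

Lemma Lmx_Linv d : Lmx d * Linv d = 1.
Proof.
apply/matrixP => i j; rewrite -mulmxE Lmx_mulE /Linv.
case: i => [[|i] hi] /=; rewrite !mxE /=.
  by rewrite -val_eqE /= addr0; case: (j : nat).
rewrite (@mget_mx d d (fun r j => if (j <= r)%N then (-1) ^+ (r - j) else 0)).
rewrite (ltn_trans _ hi) // -val_eqE /=.
case: (ltngtP j i.+1) => [ltji|ltij|->].
- by rewrite -ltnS ltji (subSn (ltji : (j <= i)%N)) exprS mulN1r addNr.
- by rewrite leqNgt (ltnW ltij) add0r.
- by rewrite subnn ltnn addr0.
Qed.

Lemma Linv_Lmx d : Linv d * Lmx d = 1.
Proof. by rewrite -mulmxE; apply: mulmx1C; rewrite mulmxE Lmx_Linv. Qed.

Lemma trmxM d (X Y : 'M[int]_d) : (X * Y)^T = Y^T * X^T.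
Proof. by rewrite -!mulmxE trmx_mul. Qed.

Definition Binv d : 'M[int]_d := (Linv d)^T * Linv d.

Lemma Bmx_Binv d : Bmx d * Binv d = 1.
Proof.
by rewrite /Bmx /Binv -mulrA (mulrA (Lmx d)^T) -trmxM Linv_Lmx trmx1 mul1r Lmx_Linv.
Qed.

Lemma Binv_Bmx d : Binv d * Bmx d = 1.
Proof. by rewrite -mulmxE; apply: mulmx1C; rewrite mulmxE Bmx_Binv. Qed.

Lemma Bmx_Binv_comm d : GRing.comm (Bmx d) (Binv d).
Proof. by rewrite /GRing.comm Bmx_Binv Binv_Bmx. Qed.

Definition Bpow d (z : int) : 'M[int]_d :=
  match z with Posz n => Bmx d ^+ n | Negz n => Binv d ^+ n.+1 end.

Lemma BpowS d z : Bpow d (z + 1) = Bmx d * Bpow d z.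
Proof.
case: z => [n|[|n]] /=; first by rewrite addn1 exprS.
  by rewrite expr1 Bmx_Binv.
by rewrite subn1 /= [in RHS]exprS mulrA Bmx_Binv mul1r.
Qed.

Lemma BpowSr d z : Bpow d (z + 1) = Bpow d z * Bmx d.
Proof.
rewrite BpowS; case: z => [n|n] /=; first by rewrite -exprS exprSr.
by apply: commrX; exact: Bmx_Binv_comm.
Qed.

Lemma Bpow_addn d z n : Bpow d (z + n%:Z) = Bpow d z * Bmx d ^+ n.
Proof.
elim: n => [|n IH]; first by rewrite addr0 expr0 mulr1.
by rewrite exprSr -addn1 PoszD addrA BpowSr IH mulrA.
Qed.

Lemma Bpow_addnl d z n : Bpow d (z + n%:Z) = Bmx d ^+ n * Bpow d z.
Proof.
elim: n => [|n IH]; first by rewrite addr0 expr0 mul1r.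
by rewrite exprS -addn1 PoszD addrA BpowS IH mulrA.
Qed.

Lemma Bpow_opp d z : Bpow d z * Bpow d (- z) = 1.
Proof.
case: z => [[|n]|n] /=; first by rewrite expr0 mulr1.
  by rewrite -exprMn_comm ?Bmx_Binv ?expr1n //; exact: Bmx_Binv_comm.
by rewrite -exprMn_comm ?Binv_Bmx ?expr1n //; apply/esym; exact: Bmx_Binv_comm.
Qed.

Lemma det_Bpow d z : \det (Bpow d z) = 1.
Proof.
have detL : \det (Lmx d) = 1 by apply: det_unitrig; [exact: Lmx_trig|exact: Lmx_diag].
have detLinv : \det (Linv d) = 1.
  by apply: det_unitrig; [exact: Linv_trig|exact: Linv_diag].
have detB : \det (Bmx d) = 1 by rewrite /Bmx -mulmxE det_mulmx det_tr detL mulr1.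
have detBinv : \det (Binv d) = 1.
  by rewrite /Binv -mulmxE det_mulmx det_tr detLinv mulr1.
by case: z => n /=; rewrite det_pow ?detB ?detBinv expr1n.
Qed.

Lemma rev_LmxT d : rev_mx (Lmx d)^T = Lmx d.
Proof.
apply/matrixP => i j; rewrite !mxE /=.
have hi := ltn_ord i; have hj := ltn_ord j.
congr (_%:R + _%:R); first by rewrite (inj_eq rev_ord_inj) eq_sym.
by apply/eqP/eqP; lia.
Qed.

Lemma rev_Lmx d : rev_mx (Lmx d) = (Lmx d)^T.
Proof. by rewrite -{1}(trmxK (Lmx d)) rev_mxT rev_LmxT. Qed.

Lemma rev_LinvT d : rev_mx (Linv d)^T = Linv d.
Proof.
have : rev_mx (Linv d)^T * Lmx d = 1.
  by rewrite -rev_LmxT -rev_mxM -trmxM Lmx_Linv trmx1 rev_mx1.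
by move=> /(congr1 (fun X => X * Linv d)); rewrite -mulrA Lmx_Linv mulr1 mul1r.
Qed.

Lemma rev_Linv d : rev_mx (Linv d) = (Linv d)^T.
Proof. by rewrite -{1}(trmxK (Linv d)) rev_mxT rev_LinvT. Qed.

Lemma conj_pow d (X : 'M[int]_d) n :
  (Linv d * X * Lmx d) ^+ n = Linv d * X ^+ n * Lmx d.
Proof.
elim: n => [|n IH]; first by rewrite !expr0 mulr1 Linv_Lmx.
by rewrite exprS IH !mulrA -(mulrA _ (Lmx d)) Lmx_Linv mulr1 exprS !mulrA.
Qed.

Lemma rev_Bpow d z : rev_mx (Bpow d z) = Linv d * Bpow d (z + 1) * (Linv d)^T.
Proof.
have -> : rev_mx (Bpow d z) = Linv d * Bpow d z * Lmx d.
  case: z => n /=; rewrite rev_mxX /Bmx /Binv rev_mxM -conj_pow; congr (_ ^+ _).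
    by rewrite rev_Lmx rev_LmxT !mulrA Linv_Lmx mul1r.
  by rewrite rev_Linv rev_LinvT -!mulrA Linv_Lmx mulr1.
by rewrite BpowSr /Bmx !mulrA -(mulrA _ (Lmx d)^T) -trmxM Linv_Lmx trmx1 mulr1.
Qed.

Definition moment d (w : int) : int := ((e0 d)^T *m Bpow d w *m e0 d) 0 0.

Definition Cmodel d (z : int) : int :=
  if (z %% 2 == 0)%Z then moment d (z %/ 2)%Z else 0.

Lemma Cmodel_divmod2 d w (r : nat) : (r < 2)%N ->
  Cmodel d (w * 2 + r%:Z) = if r == 0%N then moment d w else 0.
Proof.
move=> hr; rewrite /Cmodel modzMDl divzMDl //.
by case: r hr => [|[|]] //= _; rewrite addr0.
Qed.

Lemma int_divmod2 (z : int) : exists w (r : nat), (r < 2)%N /\ z = w * 2 + r%:Z.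
Proof.
have mod_ge0 := modz_ge0 z (isT : (2 : int) != 0).
exists (z %/ 2)%Z, `|(z %% 2)%Z|%N; split; last by rewrite gez0_abs // -divz_eq.
by have := ltz_pmod z (isT : (0 : int) < 2); lia.
Qed.

Lemma e0T_mul d (v : 'cV[int]_d) (o : 'I_d) :
  (o : nat) = 0%N -> ((e0 d)^T *m v) 0 0 = v o 0.
Proof.
move=> o0; rewrite mxE (bigD1 o) //= big1 => [|l lo]; first by rewrite !mxE o0 mul1r addr0.
rewrite !mxE; case: eqP => [l0|]; last by rewrite mul0r.
by case/eqP: lo; apply: val_inj; rewrite /= l0 o0.
Qed.

(* On the naturals the candidate is C, by the transfer-matrix formula and
   the vanishing of odd-length walks. *)
Lemma Cmodel_nat d : (0 < d)%N -> forall N : nat, Cmodel d N%:Z = (C (2 * d).-1 N)%:Z.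
Proof.
move=> hd N; rewrite /C card_path_ok.
have -> : N%:Z = (N./2)%:Z * 2 + (odd N)%:Z.
  by rewrite -PoszM -PoszD muln2 addnC odd_double_half.
rewrite Cmodel_divmod2; last by case: (odd N).
have [oddN|evenN] /= := boolP (odd N); first by rewrite walks_odd // addn0.
rewrite /moment /= -mulmxA (@e0T_mul _ _ (Ordinal hd)) // Bmx_pow_e0 mxE /= muln0.
suff -> : (2 * N./2)%N = N by [].
by have := odd_double_half N; rewrite (negbTE evenN); lia.
Qed.

(* A linear recurrence satisfied by the candidate on the naturals holds on
   all of Z: splitting by parity, the recurrence at w * 2 + r reads
   <e0, B^w v_r> = 0 for a fixed vector v_r, and v_r = 0 by [krylov_zero]. *)
Lemma Cmodel_recurrence d D (a : nat -> int) :
  (forall N : nat, \sum_(i < D.+1) a i * Cmodel d (N%:Z + (i : nat)%:Z) = 0) ->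
  forall z : int, \sum_(i < D.+1) a i * Cmodel d (z + (i : nat)%:Z) = 0.
Proof.
move=> recN.
pose x (r i : nat) : 'cV[int]_d :=
  if odd (r + i) then 0 else Bmx d ^+ (r + i)./2 *m e0 d.
pose v r := \sum_(i < D.+1) a i *: x r i.
have sum_v w (r : nat) : (r < 2)%N ->
    \sum_(i < D.+1) a i * Cmodel d (w * 2 + r%:Z + (i : nat)%:Z) =
    ((e0 d)^T *m Bpow d w *m v r) 0 0.
  move=> hr; rewrite /v mulmx_sumr summxE; apply: eq_bigr => i _.
  rewrite -scalemxAr mxE; congr (_ * _).
  have -> : w * 2 + r%:Z + (i : nat)%:Z =
            (w + ((r + i)./2)%:Z) * 2 + (odd (r + i))%:Z.
    by have := odd_double_half (r + i); rewrite -muln2; lia.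
  rewrite Cmodel_divmod2 /x; last by case: odd.
  case: (odd (r + i)) => /=; first by rewrite mulmx0 mxE.
  by rewrite /moment Bpow_addn -mulmxE !mulmxA.
have v0 r : (r < 2)%N -> v r = 0.
  move=> hr; apply: krylov_zero => j _.
  rewrite -[Bmx d ^+ j]/(Bpow d j) -sum_v //.
  by have -> : j%:Z * 2 + r%:Z = (j * 2 + r)%N%:Z by lia.
move=> z; have [w [r [hr ->]]] := int_divmod2 z.
by rewrite sum_v // v0 // mulmx0 mxE.
Qed.

Lemma Cext_moment d (hd : (0 < d)%N) c :
  Cext (2 * d).-1 c -> forall w, c (w * 2) = moment d w.
Proof.
case=> cN [D [a [a0 [_ rec]]]].
have agree : c =1 Cmodel d.
  apply: (recurrence_backward_unique a0 rec) => [|N]; last by rewrite cN Cmodel_nat.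
  apply: Cmodel_recurrence => N; rewrite -[RHS](rec N); apply: eq_bigr => i _.
  by rewrite -PoszD Cmodel_nat // cN.
by move=> w; rewrite agree -[w * 2]addr0 (Cmodel_divmod2 _ _ (isT : (0 < 2)%N)).
Qed.

Definition Umx d : 'M[int]_d := \matrix_(r, j) (Bmx d ^+ j *m e0 d) r 0.

Lemma UmxT_trig d : is_trig_mx (Umx d)^T.
Proof. by apply/is_trig_mxP => i j ltij; rewrite mxE [Umx d _ _]mxE krylov_high. Qed.

Lemma UmxT_diag d (i : 'I_d) : (Umx d)^T i i = 1.
Proof. by rewrite mxE [Umx d _ _]mxE krylov_diag. Qed.

(* A p x p Hankel determinant of the values c (2 (z + i + j)) is a Gram
   determinant of Krylov vectors, hence the leading minor of B^z. *)
Lemma hankel_det_lead d p (h : (p <= d)%N) c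
    (cE : forall w, c (w * 2) = moment d w) (z : int) :
  \det (\matrix_(i < p, j < p) c ((z + (i : nat)%:Z + (j : nat)%:Z) * 2)) =
  \det (lead_mx h (Bpow d z)).
Proof.
have Umx_entry (r j : 'I_d) : Umx d r j = (Bmx d ^+ j *m e0 d) r 0 by rewrite mxE.
have gram (i j : 'I_d) : c ((z + (i : nat)%:Z + (j : nat)%:Z) * 2) =
    ((Umx d)^T * Bpow d z * ((Umx d)^T)^T) i j.
  have -> : c ((z + (i : nat)%:Z + (j : nat)%:Z) * 2) =
      ((Bmx d ^+ i *m e0 d)^T *m Bpow d z *m (Bmx d ^+ j *m e0 d)) 0 0.
    rewrite cE /moment Bpow_addn Bpow_addnl trmx_mul Bmx_pow_sym.
    by rewrite -!mulmxE !mulmxA.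
  rewrite trmxK -!mulmxE !mxE; apply: eq_bigr => b _; rewrite Umx_entry.
  congr (_ * _); rewrite !mxE; apply: eq_bigr => a _.
  by rewrite [in RHS]mxE Umx_entry mxE.
rewrite -(det_lead_conj h _ (UmxT_trig d) (@UmxT_diag d)).
congr (\det _); apply/matrixP => i j; rewrite mxE [RHS]mxE.
exact: (gram (widen_ord h i) (widen_ord h j)).
Qed.

(* Duality of leading minors: the leading k x k minor of B^z equals the
   leading m x m minor of B^(1 - z), where d = k + m.  By Jacobi's identity
   the former is the trailing m x m minor of B^-z (det B^z = 1), and the
   reversal [rev_Bpow] turns that into a leading minor of B^(1 - z). *)
Lemma lead_minor_duality k m z :
  \det (lead_mx (leq_addr m k) (Bpow (k + m) z)) =
  \det (lead_mx (leq_addl k m) (Bpow (k + m) (1 - z))).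
Proof.
have -> : lead_mx (leq_addr m k) (Bpow (k + m) z) = ulsubmx (Bpow (k + m) z).
  by apply/matrixP => i j; rewrite !mxE; congr (Bpow _ _ _ _); apply: val_inj.
rewrite (det_ulsub_inverse (Bpow_opp _ z)) det_Bpow mul1r -det_rev_mx.
have -> : rev_mx (drsubmx (Bpow (k + m) (- z))) =
          lead_mx (leq_addl k m) (rev_mx (Bpow (k + m) (- z))).
  apply/matrixP => i j; rewrite !mxE; congr (Bpow _ _ _ _); apply: val_inj => /=.
    by have := ltn_ord i; lia.
  by have := ltn_ord j; lia.
rewrite rev_Bpow det_lead_conj ?Linv_trig //; last exact: Linv_diag.
by rewrite addrC.
Qed.

Theorem theorem15 (n k m : nat) (c : int -> int) :
  Cext (2 * k + 2 * m).-1 c ->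
  \det (\matrix_(i < k, j < k)
          c (2 * (n + i + j + 2 * m)%N%:Z - 2)) =
  \det (\matrix_(i < m, j < m)
          c (- (2 * (n + i + j)%N%:Z))).
Proof.
move=> cext; have [km0|km_gt0] := posnP (k + m).
  have [-> ->] : k = 0%N /\ m = 0%N by lia.
  by rewrite !det_mx00.
have cE : forall w, c (w * 2) = moment (k + m) w.
  by apply: Cext_moment; rewrite // mulnDr.
pose z : int := (n + 2 * m)%N%:Z - 1.
transitivity (\det (lead_mx (leq_addr m k) (Bpow (k + m) z))).
  rewrite -(hankel_det_lead _ cE); congr (\det _).
  by apply/matrixP => i j; rewrite !mxE; congr c; rewrite /z; lia.
rewrite lead_minor_duality -(hankel_det_lead _ cE) -det_rev_mx; congr (\det _).
apply/matrixP => i j; rewrite !mxE; congr c; rewrite /z /=.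
by have := ltn_ord i; have := ltn_ord j; lia.
Qed.
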